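(* Let $n\geq 2$, $\alpha>0$, and $k\in\mathbb{N}\setminus\{0\}$. Let $\mathbb{D}_k:=\{2^{-j}:0\leq j\leq k\}$ and $$\mathscr{R}_k:=\Big\{[0,s_1]\times\cdots\times[0,s_{n-1}]\times\Big[0,\frac{\alpha}{s_1\cdots s_{n-1}}\Big] : s_1,\dots,s_{n-1}\in\mathbb{D}_k\Big\}.$$ Then $\big|\bigcup_{R\in\mathscr{R}_k}R\big|\geq\frac{1}{3\cdot 2^{n-2}}\,k^{n-1}\alpha$.
   Context: $|\cdot|$ denotes Lebesgue measure on $\mathbb{R}^n$. *)

From Stdlib Require Import Reals.
Open Scope R_scope.

(* Points of R^n are represented as functions nat -> R; only the
   coordinates 0..n-1 are relevant. *)

Fixpoint prodR (n : nat) (f : nat -> R) : R :=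
  match n with
  | O => 1
  | S m => prodR m f * f m
  end.

Fixpoint sumR (N : nat) (g : nat -> R) : R :=
  match N with
  | O => 0
  | S m => sumR m g + g m
  end.

Definition box_vol (n : nat) (a b : nat -> R) : R :=
  prodR n (fun i => Rmax 0 (b i - a i)).

Definition box_cover (n : nat) (E : (nat -> R) -> Prop)
  (a b : nat -> nat -> R) : Prop :=
  forall x, E x -> exists k : nat,
    forall i, (i < n)%nat -> a k i <= x i <= b k i.

(* Lebesgue (outer) measure of E ⊆ R^n is at least c:
   |E| = inf over countable box covers of sum of volumes (in [0, +oo]),
   so |E| >= c iff for every cover, c <= sup of the partial sums
   of the volumes, i.e. c is below every upper bound of the partial sums. *)
Definition lebesgue_measure_ge (n : nat) (E : (nat -> R) -> Prop) (c : R) : Prop :=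
  forall a b : nat -> nat -> R, box_cover n E a b ->
    forall M : R, (forall N : nat, sumR N (fun k => box_vol n (a k) (b k)) <= M) ->
    c <= M.

Definition in_Dk (k : nat) (s : R) : Prop :=
  exists j : nat, (j <= k)%nat /\ s = / 2 ^ j.

(* Union of the boxes in R_k:
   [0,s_1] x ... x [0,s_{n-1}] x [0, alpha/(s_1...s_{n-1})], s_i in D_k.
   Coordinates are indexed 0..n-1; s is indexed 0..n-2. *)
Definition union_Rk (n k : nat) (alpha : R) (x : nat -> R) : Prop :=
  exists s : nat -> R,
    (forall i, (i < n - 1)%nat -> in_Dk k (s i)) /\
    (forall i, (i < n - 1)%nat -> 0 <= x i <= s i) /\
    0 <= x (n - 1)%nat <= alpha / prodR (n - 1) s.

(* The union contains the n-1 fold products of the dyadic intervals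
   (2^(-j-1), 2^(-j)], 0 <= j < k, each topped by the interval (0, alpha 2^(j_1+...+j_(n-1))];
   these k^(n-1) cells are pairwise disjoint, each of volume alpha 2^(1-n), so they
   fill alpha (k/2)^(n-1) >= alpha k^(n-1) / (3 2^(n-2)).  That a countable cover by
   closed boxes has at least the total volume of a finite family of half-open boxes
   it covers is proved by induction on the dimension: fixing the first coordinate t
   gives an instance in one dimension less, and integrating the resulting inequality
   in t against Lebesgue measure (monotone convergence) gives the next dimension.
   The families carry nonnegative weights because slicing turns the indicator of the
   first coordinate into a weight. *)

From Stdlib Require Import Reals Lra Lia List ClassicalDescription Classical.
From mathcomp Require all_boot all_order all_algebra boolp classical_sets functions reals
  ereal topology normedtype sequences measure lebesgue_measure measurable_realfun numfun
  lebesgue_integral Rstruct.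
Import ListNotations.
Open Scope R_scope.

Definition chi (P : Prop) : R := if excluded_middle_informative P then 1 else 0.

Lemma chi_true (P : Prop) : P -> chi P = 1.
Proof. intro HP. unfold chi. destruct (excluded_middle_informative P); tauto. Qed.

Lemma chi_false (P : Prop) : ~ P -> chi P = 0.
Proof. intro HP. unfold chi. destruct (excluded_middle_informative P); tauto. Qed.

Lemma chi_bounds (P : Prop) : 0 <= chi P <= 1.
Proof. unfold chi. destruct (excluded_middle_informative P); lra. Qed.

Lemma chi_le (P Q : Prop) : (P -> Q) -> chi P <= chi Q.
Proof.
  intro HPQ. destruct (classic P) as [HP|HP].
  - rewrite (chi_true P HP), (chi_true Q (HPQ HP)). lra.
  - rewrite (chi_false P HP). apply chi_bounds.
Qed.

Lemma chi_iff (P Q : Prop) : (P <-> Q) -> chi P = chi Q.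
Proof. intro HPQ. apply Rle_antisym; apply chi_le; apply HPQ. Qed.

Lemma chi_and (P Q : Prop) : chi (P /\ Q) = chi P * chi Q.
Proof.
  destruct (classic P) as [HP|HP].
  - rewrite (chi_true P HP), Rmult_1_l. apply chi_iff. tauto.
  - rewrite (chi_false P HP), chi_false by tauto. ring.
Qed.

Definition lsum {A : Type} (L : list A) (f : A -> R) : R :=
  fold_right (fun q acc => f q + acc) 0 L.

Lemma lsum_ext {A : Type} (L : list A) (f g : A -> R) :
  (forall q, In q L -> f q = g q) -> lsum L f = lsum L g.
Proof.
  induction L as [|q L IH]; intro Hfg; simpl; [reflexivity|].
  rewrite Hfg by (left; reflexivity).
  rewrite IH; [reflexivity|]. intros q' Hq'. apply Hfg. right. exact Hq'.
Qed.

Lemma lsum_map {A B : Type} (h : A -> B) (L : list A) (f : B -> R) :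
  lsum (map h L) f = lsum L (fun q => f (h q)).
Proof. induction L as [|q L IH]; simpl; [reflexivity|]. rewrite IH. reflexivity. Qed.

Lemma lsum_app {A : Type} (L1 L2 : list A) (f : A -> R) :
  lsum (L1 ++ L2) f = lsum L1 f + lsum L2 f.
Proof. induction L1 as [|q L IH]; simpl; [ring|]. rewrite IH. ring. Qed.

Lemma lsum_mult_l {A : Type} (L : list A) (f : A -> R) (c : R) :
  lsum L (fun q => c * f q) = c * lsum L f.
Proof. induction L as [|q L IH]; simpl; [ring|]. rewrite IH. ring. Qed.

Lemma lsum_ge0 {A : Type} (L : list A) (f : A -> R) :
  (forall q, In q L -> 0 <= f q) -> 0 <= lsum L f.
Proof.
  induction L as [|q L IH]; intro Hf; simpl; [lra|].
  apply Rplus_le_le_0_compat; [apply Hf; left; reflexivity|].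
  apply IH. intros q' Hq'. apply Hf. right. exact Hq'.
Qed.

Lemma lsum_flat_map_seq {A : Type} (F : nat -> list A) (f : A -> R) (k : nat) :
  lsum (flat_map F (seq 0 k)) f = sumR k (fun j => lsum (F j) f).
Proof.
  induction k as [|k IH]; [reflexivity|].
  rewrite seq_S, flat_map_app, lsum_app, IH. simpl. rewrite app_nil_r. reflexivity.
Qed.

Lemma sumR_ext (N : nat) (u v : nat -> R) :
  (forall k, (k < N)%nat -> u k = v k) -> sumR N u = sumR N v.
Proof.
  induction N as [|N IH]; intro Huv; simpl; [reflexivity|].
  rewrite Huv by lia. rewrite IH; [reflexivity|]. intros k Hk. apply Huv. lia.
Qed.

Lemma sumR_ge0 (N : nat) (u : nat -> R) : (forall k, 0 <= u k) -> 0 <= sumR N u.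
Proof.
  intro Hu. induction N as [|N IH]; simpl; [lra|]. specialize (Hu N). lra.
Qed.

Lemma sumR_const (N : nat) (c : R) : sumR N (fun _ => c) = INR N * c.
Proof. induction N as [|N IH]; simpl sumR; [simpl; ring|]. rewrite IH, S_INR. ring. Qed.

Definition series_ge (u : nat -> R) (c : R) : Prop :=
  forall M, (forall N, sumR N u <= M) -> c <= M.

Lemma series_ge_ext_le (u v : nat -> R) (c d : R) :
  (forall k, u k = v k) -> d <= c -> series_ge u c -> series_ge v d.
Proof.
  intros Huv Hdc Hu M HM. apply Rle_trans with c; [exact Hdc|]. apply Hu. intro N.
  rewrite (sumR_ext N u v) by auto. apply HM.
Qed.

Module IntervalCover.
Import all_boot all_order all_algebra boolp classical_sets functions reals ereal topology
  normedtype sequences measure lebesgue_measure measurable_realfun numfun lebesgue_integral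
  Rstruct.
Import Order.TTheory GRing.Theory Num.Theory.
Local Open Scope classical_set_scope.
Local Open Scope ring_scope.

Section LebesgueIntervals.
Variable R : realType.
Local Open Scope ereal_scope.
Notation mu := (@lebesgue_measure R).

Lemma measurable_scaled_indic (c : R) (i : interval R) :
  measurable_fun setT (fun t : R => (c * \1_[set` i] t)%:E).
Proof. by apply/measurable_EFinP/measurable_funM => //; apply: measurable_indic. Qed.

Lemma integral_scaled_indic_itv (c x y : R) (bx bx' : bool) : (0 <= c)%R ->
  \int[mu]_t (c * \1_[set` Interval (BSide bx x) (BSide bx' y)] t)%:E
  = (c * Num.max 0 (y - x))%:E.
Proof.
move=> c0; under eq_integral do rewrite EFinM.
rewrite ge0_integralZl_EFin //; last first.
  exact/measurable_EFinP/measurable_indic.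
rewrite integral_indic // setIT -[X in _ * X]/(mu _) lebesgue_measure_itv /= lte_fin.
case: ltP => [xy|yx]; first by rewrite -EFinD -EFinM max_r // subr_ge0 ltW.
by rewrite mule0 max_l ?mulr0 // subr_le0.
Qed.

Lemma integral_sum_indic_oc (L : seq (R * R * R)) :
  (forall q, q \in L -> 0 <= q.1.1)%R ->
  \int[mu]_t (\sum_(q <- L) q.1.1 * \1_[set` `]q.1.2, q.2]] t)%:E
  = (\sum_(q <- L) q.1.1 * Num.max 0 (q.2 - q.1.2))%:E.
Proof.
elim: L => [_|q L IH L0].
  by rewrite big_nil; apply: integral0_eq => t _; rewrite big_nil.
have q0 : (0 <= q.1.1)%R by apply: L0; rewrite mem_head.
have {}L0 q' : q' \in L -> (0 <= q'.1.1)%R by move=> Lq'; apply: L0; rewrite inE Lq' orbT.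
under eq_integral do rewrite big_cons EFinD.
rewrite ge0_integralD //.
- by rewrite (integral_scaled_indic_itv _ _ _ false false q0) IH // big_cons EFinD.
- by move=> t _; rewrite lee_fin mulr_ge0.
- exact: measurable_scaled_indic.
- move=> t _; rewrite lee_fin big_seq sumr_ge0 // => q' Lq'.
  by rewrite mulr_ge0 ?L0.
- apply: measurableT_comp => //; apply: measurable_sum => q'.
  by apply: measurable_funM => //; exact: measurable_indic.
Qed.

Lemma itv_oc_lengths_le_cover (w a b : nat -> R) (L : seq (R * R * R)) :
  (forall k, 0 <= w k)%R -> (forall q, q \in L -> 0 <= q.1.1)%R ->
  (forall t, (\sum_(q <- L) q.1.1 * \1_[set` `]q.1.2, q.2]] t)%:E
             <= \sum_(k <oo) (w k * \1_[set` `[a k, b k]] t)%:E) ->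
  (\sum_(q <- L) q.1.1 * Num.max 0 (q.2 - q.1.2))%:E
  <= \sum_(k <oo) (w k * Num.max 0 (b k - a k))%:E.
Proof.
move=> w0 L0 pointwise.
rewrite -integral_sum_indic_oc //.
rewrite (eq_eseriesr (fun k _ =>
  esym (integral_scaled_indic_itv _ (a k) (b k) true false (w0 k)))).
rewrite -integral_nneseries //; last 2 first.
- by move=> k; exact: measurable_scaled_indic.
- by move=> k t _; rewrite lee_fin mulr_ge0.
apply: ge0_le_integral => //.
- move=> t _; rewrite lee_fin big_seq sumr_ge0 // => q Lq.
  by rewrite mulr_ge0 ?L0.
- apply: measurableT_comp => //; apply: measurable_sum => q.
  by apply: measurable_funM => //; exact: measurable_indic.
- apply: ge0_emeasurable_sum => [k t _ _|k _]; first by rewrite lee_fin mulr_ge0.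
  exact: measurable_scaled_indic.
Qed.

End LebesgueIntervals.

Lemma sumR_big (N : nat) (u : nat -> R) : sumR N u = \sum_(k < N) u k.
Proof. by elim: N => [|N IH]; rewrite ?big_ord0 // big_ord_recr /= IH. Qed.

Lemma lsum_big (L : list (R * R * R)) (f : R * R * R -> R) :
  lsum L f = \sum_(q <- L) f q.
Proof. by elim: L => [|q L IH]; rewrite ?big_nil // big_cons /= IH. Qed.

Section SeriesBridge.
Local Open Scope ereal_scope.

Lemma series_geE (u : nat -> R) (c : R) : (forall k, 0 <= u k)%R ->
  series_ge u c <-> c%:E <= \sum_(k <oo) (u k)%:E.
Proof.
move=> u0; have u0' n : (0 <= n)%N -> xpredT n -> 0 <= (u n)%:E.
  by move=> _ _; rewrite lee_fin.
split=> [cu|cu M uM].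
- have : 0 <= \sum_(k <oo) (u k)%:E by apply: nneseries_ge0.
  case Es: (\sum_(k <oo) (u k)%:E) => [r||] // _; rewrite ?leey // lee_fin.
  apply/RleP/cu => N; have := nneseries_lim_ge N u0'.
  by rewrite Es big_mkord sumEFin lee_fin sumR_big => /RleP.
- suff : \sum_(k <oo) (u k)%:E <= M%:E by move=> /(le_trans cu); rewrite lee_fin => /RleP.
  rewrite (cvg_lim _ (ereal_nondecreasing_cvgn (ereal_nondecreasing_series u0'))) //.
  apply: ge_ereal_sup => _ [N _ <-] /=.
  by rewrite big_mkord sumEFin lee_fin -sumR_big; apply/RleP.
Qed.

End SeriesBridge.

Lemma chi_itv_cc (x y t : R) : chi (Rle x t /\ Rle t y) = \1_[set` `[x, y]] t.
Proof.
rewrite indicE mem_setE in_itv /=.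
case: (boolP ((x <= t) && (t <= y))) => [/andP[/RleP xt /RleP ty]|xty].
  by rewrite chi_true.
by rewrite chi_false // => -[/RleP xt /RleP ty]; rewrite xt ty in xty.
Qed.

Lemma chi_itv_oc (x y t : R) : chi (Rlt x t /\ Rle t y) = \1_[set` `]x, y]] t.
Proof.
rewrite indicE mem_setE in_itv /=.
case: (boolP ((x < t) && (t <= y))) => [/andP[/RltP xt /RleP ty]|xty].
  by rewrite chi_true.
by rewrite chi_false // => -[/RltP xt /RleP ty]; rewrite xt ty in xty.
Qed.

Lemma In_of_mem (L : list (R * R * R)) (q : R * R * R) : q \in L -> List.In q L.
Proof. by elim: L => [|q' L IH] //=; rewrite inE => /orP[/eqP ->|/IH]; auto. Qed.

Lemma interval_lengths_le_cover (w a b : nat -> R) (L : list (R * R * R)) :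
  (forall k, Rle 0 (w k)) -> (forall q, List.In q L -> Rle 0 q.1.1) ->
  (forall t, series_ge (fun k => Rmult (w k) (chi (Rle (a k) t /\ Rle t (b k))))
                       (lsum L (fun q => Rmult q.1.1 (chi (Rlt q.1.2 t /\ Rle t q.2))))) ->
  series_ge (fun k => Rmult (w k) (Rmax 0 (Rminus (b k) (a k))))
            (lsum L (fun q => Rmult q.1.1 (Rmax 0 (Rminus q.2 q.1.2)))).
Proof.
move=> w0 L0 pointwise.
apply/series_geE => [k|]; first by apply/RleP; apply: Rmult_le_pos (w0 k) (Rmax_l _ _).
rewrite lsum_big; under eq_bigr do rewrite RmaxE.
under eq_eseriesr do rewrite RmaxE.
apply: itv_oc_lengths_le_cover => [k|q /In_of_mem /L0 /RleP //|t]; first exact/RleP.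
under eq_bigr do rewrite -chi_itv_oc.
under eq_eseriesr do rewrite -chi_itv_cc.
rewrite -lsum_big; apply/series_geE => // k.
by apply/RleP; apply: Rmult_le_pos (w0 k) (proj1 (chi_bounds _)).
Qed.

End IntervalCover.

Definition ptail (x : nat -> R) : nat -> R := fun i => x (S i).

Definition pcons (t : R) (x : nat -> R) : nat -> R :=
  fun i => match i with O => t | S j => x j end.

Lemma prodR_S (m : nat) (f : nat -> R) : prodR (S m) f = f O * prodR m (ptail f).
Proof.
  induction m as [|m IH]; [simpl; ring|].
  change (prodR (S (S m)) f) with (prodR (S m) f * f (S m)).
  rewrite IH. simpl. unfold ptail. ring.
Qed.

Lemma prodR_pos (m : nat) (f : nat -> R) :
  (forall i, (i < m)%nat -> 0 < f i) -> 0 < prodR m f.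
Proof.
  induction m as [|m IH]; intro Hf; simpl; [lra|].
  apply Rmult_lt_0_compat; [apply IH; intros; apply Hf | apply Hf]; lia.
Qed.

Lemma box_vol_S (m : nat) (a b : nat -> R) :
  box_vol (S m) a b = Rmax 0 (b O - a O) * box_vol m (ptail a) (ptail b).
Proof. unfold box_vol. rewrite prodR_S. reflexivity. Qed.

Lemma box_vol_ge0 (m : nat) (a b : nat -> R) : 0 <= box_vol m a b.
Proof.
  unfold box_vol. induction m as [|m IH]; simpl; [lra|].
  apply Rmult_le_pos; [exact IH | apply Rmax_l].
Qed.

Definition in_box (m : nat) (a b x : nat -> R) : Prop :=
  forall i, (i < m)%nat -> a i <= x i <= b i.

Definition in_hbox (m : nat) (l r x : nat -> R) : Prop :=
  forall i, (i < m)%nat -> l i < x i <= r i.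

Lemma chi_in_box_S (m : nat) (a b x : nat -> R) :
  chi (in_box (S m) a b x)
  = chi (a O <= x O <= b O) * chi (in_box m (ptail a) (ptail b) (ptail x)).
Proof.
  rewrite <- chi_and. apply chi_iff. split.
  - intro Hx. split; [apply Hx; lia|]. intros i Hi. apply (Hx (S i)). lia.
  - intros [H0 Hx] [|i] Hi; [exact H0|]. apply (Hx i). lia.
Qed.

Lemma chi_in_hbox_S (m : nat) (l r x : nat -> R) :
  chi (in_hbox (S m) l r x)
  = chi (l O < x O <= r O) * chi (in_hbox m (ptail l) (ptail r) (ptail x)).
Proof.
  rewrite <- chi_and. apply chi_iff. split.
  - intro Hx. split; [apply Hx; lia|]. intros i Hi. apply (Hx (S i)). lia.
  - intros [H0 Hx] [|i] Hi; [exact H0|]. apply (Hx i). lia.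
Qed.

Record wbox := WBox { wcoef : R; wlo : nat -> R; whi : nat -> R }.

Definition wsum_chi (m : nat) (T : list wbox) (x : nat -> R) : R :=
  lsum T (fun p => wcoef p * chi (in_hbox m (wlo p) (whi p) x)).

Definition wsum_vol (m : nat) (T : list wbox) : R :=
  lsum T (fun p => wcoef p * box_vol m (wlo p) (whi p)).

Lemma wsum_chi_ge0 (m : nat) (T : list wbox) (x : nat -> R) :
  (forall p, In p T -> 0 <= wcoef p) -> 0 <= wsum_chi m T x.
Proof.
  intro HT. apply lsum_ge0. intros p Hp.
  apply Rmult_le_pos; [apply HT, Hp | apply chi_bounds].
Qed.

Definition wbox_slice (t : R) (p : wbox) : wbox :=
  WBox (wcoef p * chi (wlo p O < t <= whi p O)) (ptail (wlo p)) (ptail (whi p)).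

Lemma wsum_chi_slice (m : nat) (T : list wbox) (t : R) (x : nat -> R) :
  wsum_chi (S m) T (pcons t x) = wsum_chi m (map (wbox_slice t) T) x.
Proof.
  unfold wsum_chi. rewrite lsum_map. apply lsum_ext. intros p _.
  rewrite chi_in_hbox_S. unfold wbox_slice. cbn [wcoef wlo whi].
  change (ptail (pcons t x)) with x. change (pcons t x O) with t. ring.
Qed.

Definition wbox_project (m : nat) (p : wbox) : R * R * R :=
  (wcoef p * box_vol m (ptail (wlo p)) (ptail (whi p)), wlo p O, whi p O).

Lemma wsum_vol_project (m : nat) (T : list wbox) :
  wsum_vol (S m) T
  = lsum (map (wbox_project m) T) (fun q => fst (fst q) * Rmax 0 (snd q - snd (fst q))).
Proof.
  unfold wsum_vol. rewrite lsum_map. apply lsum_ext. intros p _.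
  rewrite box_vol_S. simpl. ring.
Qed.

Lemma wsum_vol_slice (m : nat) (T : list wbox) (t : R) :
  wsum_vol m (map (wbox_slice t) T)
  = lsum (map (wbox_project m) T) (fun q => fst (fst q) * chi (snd (fst q) < t <= snd q)).
Proof.
  unfold wsum_vol. rewrite !lsum_map. apply lsum_ext. intros p _. simpl. ring.
Qed.

Lemma wsum_vol_le_cover (m : nat) :
  forall (T : list wbox) (w : nat -> R) (a b : nat -> nat -> R),
  (forall k, 0 <= w k) -> (forall p, In p T -> 0 <= wcoef p) ->
  (forall x, series_ge (fun k => w k * chi (in_box m (a k) (b k) x)) (wsum_chi m T x)) ->
  series_ge (fun k => w k * box_vol m (a k) (b k)) (wsum_vol m T).
Proof.
  induction m as [|m IH]; intros T w a b Hw HT Hcover.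
  - refine (series_ge_ext_le _ _ _ _ _ _ (Hcover (fun _ => 0))).
    + intro k. rewrite chi_true by (intros i Hi; lia). reflexivity.
    + right. apply lsum_ext. intros p _. rewrite chi_true by (intros i Hi; lia). reflexivity.
  - assert (Hslices : forall t, series_ge
      (fun k => w k * box_vol m (ptail (a k)) (ptail (b k)) * chi (a k O <= t <= b k O))
      (lsum (map (wbox_project m) T)
            (fun q => fst (fst q) * chi (snd (fst q) < t <= snd q)))).
    { intro t. rewrite <- wsum_vol_slice.
      refine (series_ge_ext_le _ _ _ _ _ _ (IH (map (wbox_slice t) T)
        (fun k => w k * chi (a k O <= t <= b k O)) (fun k => ptail (a k)) (fun k => ptail (b k))
        _ _ _)); [intro; ring | right; reflexivity | | |].
      - intro k. apply Rmult_le_pos; [apply Hw | apply chi_bounds].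
      - intros p' Hp'. apply in_map_iff in Hp'. destruct Hp' as [p [<- Hp]].
        apply Rmult_le_pos; [apply HT, Hp | apply chi_bounds].
      - intro x. rewrite <- wsum_chi_slice.
        refine (series_ge_ext_le _ _ _ _ _ _ (Hcover (pcons t x))); [|right; reflexivity].
        intro k. rewrite chi_in_box_S.
        change (ptail (pcons t x)) with x. change (pcons t x O) with t. ring. }
    rewrite wsum_vol_project.
    refine (series_ge_ext_le _ _ _ _ _ _
      (IntervalCover.interval_lengths_le_cover _ _ _ _ _ _ Hslices));
      [intro k; rewrite box_vol_S; ring | right; reflexivity | |].
    + intro k. apply Rmult_le_pos; [apply Hw | apply box_vol_ge0].
    + intros q Hq. apply in_map_iff in Hq. destruct Hq as [p [<- Hp]].
      apply Rmult_le_pos; [apply HT, Hp | apply box_vol_ge0].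
Qed.

Definition wbox_cons (l r : R) (p : wbox) : wbox :=
  WBox (wcoef p) (pcons l (wlo p)) (pcons r (whi p)).

Lemma wsum_chi_cons (m : nat) (l r : R) (T : list wbox) (x : nat -> R) :
  wsum_chi (S m) (map (wbox_cons l r) T) x = chi (l < x O <= r) * wsum_chi m T (ptail x).
Proof.
  unfold wsum_chi. rewrite lsum_map, <- lsum_mult_l. apply lsum_ext. intros p _.
  rewrite chi_in_hbox_S. unfold wbox_cons. cbn [wcoef wlo whi].
  change (ptail (pcons ?t ?f)) with f. change (pcons ?t ?f O) with t. ring.
Qed.

Lemma wsum_vol_cons (m : nat) (l r : R) (T : list wbox) :
  wsum_vol (S m) (map (wbox_cons l r) T) = Rmax 0 (r - l) * wsum_vol m T.
Proof.
  unfold wsum_vol. rewrite lsum_map, <- lsum_mult_l. apply lsum_ext. intros p _.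
  rewrite box_vol_S. unfold wbox_cons. cbn [wcoef wlo whi].
  change (ptail (pcons ?t ?f)) with f. change (pcons ?t ?f O) with t. ring.
Qed.

Lemma wsum_chi_flat_map_seq (m : nat) (F : nat -> list wbox) (k : nat) (x : nat -> R) :
  wsum_chi m (flat_map F (seq 0 k)) x = sumR k (fun j => wsum_chi m (F j) x).
Proof. apply lsum_flat_map_seq. Qed.

Lemma wsum_vol_flat_map_seq (m : nat) (F : nat -> list wbox) (k : nat) :
  wsum_vol m (flat_map F (seq 0 k)) = sumR k (fun j => wsum_vol m (F j)).
Proof. apply lsum_flat_map_seq. Qed.

Fixpoint dyadic_cells (k m : nat) (h : R) : list wbox :=
  match m with
  | O => [WBox 1 (fun _ => 0) (fun _ => h)]
  | S m' => flat_map (fun j => map (wbox_cons (/ 2 ^ S j) (/ 2 ^ j))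
                                   (dyadic_cells k m' (h * 2 ^ j)))
                     (seq 0 k)
  end.

Definition staircase (k m : nat) (h : R) (x : nat -> R) : Prop :=
  exists s : nat -> R,
    (forall i, (i < m)%nat -> in_Dk k (s i)) /\
    (forall i, (i < m)%nat -> 0 <= x i <= s i) /\
    0 <= x m <= h / prodR m s.

Lemma staircase_union_Rk (k m : nat) (h : R) (x : nat -> R) :
  staircase k m h x -> union_Rk (S m) k h x.
Proof. unfold union_Rk. rewrite Nat.sub_succ, Nat.sub_0_r. intro Hx. exact Hx. Qed.

Lemma staircase_cons (k m j : nat) (h : R) (x : nat -> R) :
  (j < k)%nat -> / 2 ^ S j < x O <= / 2 ^ j ->
  staircase k m (h * 2 ^ j) (ptail x) -> staircase k (S m) h x.
Proof.
  intros Hj Hx0 [s [Hs [Hxs Hxm]]].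
  assert (H2j : 0 < 2 ^ j) by (apply pow_lt; lra).
  assert (H2Sj : 0 < / 2 ^ S j) by (apply Rinv_0_lt_compat, pow_lt; lra).
  assert (Hprod : 0 < prodR m s).
  { apply prodR_pos. intros i Hi. destruct (Hs i Hi) as [ji [_ ->]].
    apply Rinv_0_lt_compat, pow_lt. lra. }
  exists (pcons (/ 2 ^ j) s). split; [|split].
  - intros [|i] Hi; [exists j; split; [lia|reflexivity]|]. apply Hs. lia.
  - intros [|i] Hi; [simpl; lra|]. apply (Hxs i). lia.
  - rewrite prodR_S. change (ptail (pcons (/ 2 ^ j) s)) with s.
    replace (h / (pcons (/ 2 ^ j) s O * prodR m s)) with (h * 2 ^ j / prodR m s)
      by (simpl; field; lra).
    exact Hxm.
Qed.

Lemma dyadic_intervals_disjoint (i j : nat) (t : R) :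
  / 2 ^ S i < t <= / 2 ^ i -> / 2 ^ S j < t <= / 2 ^ j -> i = j.
Proof.
  assert (Hmono : forall a b : nat, (a <= b)%nat -> / 2 ^ b <= / 2 ^ a).
  { intros a b Hab. apply Rinv_le_contravar; [apply pow_lt; lra|].
    apply Rle_pow; [lra | exact Hab]. }
  intros Hi Hj. destruct (Nat.lt_trichotomy i j) as [Hij|[Hij|Hij]]; [|exact Hij|].
  - assert (/ 2 ^ j <= / 2 ^ S i) by (apply Hmono; lia). lra.
  - assert (/ 2 ^ i <= / 2 ^ S j) by (apply Hmono; lia). lra.
Qed.

Lemma sumR_chi_disjoint_le (P Q : nat -> Prop) (v : nat -> R) (k : nat) :
  (forall j, 0 <= v j <= chi (Q j)) -> (forall i j, P i -> P j -> i = j) ->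
  sumR k (fun j => chi (P j) * v j) <= chi (exists j, (j < k)%nat /\ P j /\ Q j).
Proof.
  intros Hv Hdisj. induction k as [|k IH]; simpl sumR; [apply chi_bounds|].
  destruct (classic (P k)) as [HPk|HPk].
  - rewrite (sumR_ext k _ (fun _ => 0)), sumR_const, (chi_true (P k) HPk).
    + apply Rle_trans with (chi (Q k)); [specialize (Hv k); lra|].
      apply chi_le. intro HQ. exists k. repeat split; [lia | exact HPk | exact HQ].
    + intros j Hj. rewrite chi_false; [ring|]. intro HPj.
      specialize (Hdisj _ _ HPj HPk). lia.
  - rewrite (chi_false (P k) HPk), Rmult_0_l, Rplus_0_r.
    apply Rle_trans with (1 := IH). apply chi_le.
    intros [j [Hj HPQ]]. exists j. split; [lia | exact HPQ].
Qed.

Lemma dyadic_cells_coef (k m : nat) : forall h p, In p (dyadic_cells k m h) -> wcoef p = 1.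
Proof.
  induction m as [|m IH]; intros h p Hp; simpl in Hp.
  - destruct Hp as [<-|[]]. reflexivity.
  - apply in_flat_map in Hp. destruct Hp as [j [_ Hj]].
    apply in_map_iff in Hj. destruct Hj as [q [<- Hq]]. exact (IH _ _ Hq).
Qed.

Lemma wsum_vol_dyadic_cells (k m : nat) :
  forall h, 0 <= h -> wsum_vol (S m) (dyadic_cells k m h) = h * (INR k / 2) ^ m.
Proof.
  induction m as [|m IH]; intros h Hh.
  - unfold wsum_vol, box_vol. simpl. rewrite Rmax_right; lra.
  - cbn [dyadic_cells]. rewrite wsum_vol_flat_map_seq.
    rewrite (sumR_ext k _ (fun _ => h / 2 * (INR k / 2) ^ m)), sumR_const; [simpl; field|].
    intros j _.
    assert (H2j : 0 < 2 ^ j) by (apply pow_lt; lra).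
    rewrite wsum_vol_cons, IH by (apply Rmult_le_pos; lra).
    replace (/ 2 ^ j - / 2 ^ S j) with (/ 2 ^ S j) by (simpl; field; lra).
    rewrite Rmax_right by (apply Rlt_le, Rinv_0_lt_compat, pow_lt; lra).
    simpl. field. lra.
Qed.

Lemma wsum_chi_dyadic_cells_le (k m : nat) :
  forall h x, wsum_chi (S m) (dyadic_cells k m h) x <= chi (staircase k m h x).
Proof.
  induction m as [|m IH]; intros h x.
  - unfold wsum_chi. simpl. rewrite Rmult_1_l, Rplus_0_r. apply chi_le.
    intro Hx. exists (fun _ => 1). split; [intros; lia|]. split; [intros; lia|].
    specialize (Hx O ltac:(lia)). simpl. unfold Rdiv. rewrite Rinv_1. lra.
  - cbn [dyadic_cells]. rewrite wsum_chi_flat_map_seq.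
    rewrite (sumR_ext k _ (fun j => chi (/ 2 ^ S j < x O <= / 2 ^ j)
        * wsum_chi (S m) (dyadic_cells k m (h * 2 ^ j)) (ptail x)))
      by (intros j _; apply wsum_chi_cons).
    assert (Hcells : forall j, 0 <= wsum_chi (S m) (dyadic_cells k m (h * 2 ^ j)) (ptail x)
                               <= chi (staircase k m (h * 2 ^ j) (ptail x))).
    { intro j. split; [|apply IH]. apply wsum_chi_ge0. intros p Hp.
      rewrite (dyadic_cells_coef _ _ _ _ Hp). lra. }
    apply Rle_trans with (1 := sumR_chi_disjoint_le _ _ _ k Hcells
      (fun i j => dyadic_intervals_disjoint i j (x O))).
    apply chi_le. intros [j [Hj [Hx0 Hstair]]]. exact (staircase_cons k m j h x Hj Hx0 Hstair).
Qed.

Lemma series_ge_chi_cover (n : nat) (E : (nat -> R) -> Prop) (a b : nat -> nat -> R)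
  (x : nat -> R) :
  box_cover n E a b -> series_ge (fun k => chi (in_box n (a k) (b k) x)) (chi (E x)).
Proof.
  intros Hcover M HM. destruct (classic (E x)) as [HE|HE].
  - destruct (Hcover x HE) as [k Hk]. specialize (HM (S k)). simpl in HM.
    rewrite (chi_true (in_box n (a k) (b k) x) Hk) in HM. rewrite (chi_true _ HE).
    assert (0 <= sumR k (fun j => chi (in_box n (a j) (b j) x)))
      by (apply sumR_ge0; intro; apply chi_bounds).
    lra.
  - rewrite (chi_false _ HE). apply (HM O).
Qed.

Lemma scaled_pow_le_half_pow (n k : nat) (alpha : R) :
  (2 <= n)%nat -> 0 <= alpha ->
  / (3 * 2 ^ (n - 2)) * INR k ^ (n - 1) * alpha <= alpha * (INR k / 2) ^ (n - 1).
Proof.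
  intros Hn Halpha. destruct n as [|[|m]]; [lia|lia|].
  replace (S (S m) - 2)%nat with m by lia. replace (S (S m) - 1)%nat with (S m) by lia.
  unfold Rdiv. rewrite Rpow_mult_distr, pow_inv.
  assert (H2m : 0 < 2 ^ m) by (apply pow_lt; lra).
  assert (Hk : 0 <= INR k ^ S m) by (apply pow_le, pos_INR).
  assert (Hinv : / (3 * 2 ^ m) <= / 2 ^ S m).
  { apply Rinv_le_contravar; [apply pow_lt; lra|]. simpl. lra. }
  apply Rle_trans with (/ 2 ^ S m * INR k ^ S m * alpha); [|right; ring].
  apply Rmult_le_compat_r; [exact Halpha|]. apply Rmult_le_compat_r; [exact Hk | exact Hinv].
Qed.

Theorem mainTheorem2 (n : nat) (alpha : R) (k : nat)
  (hn : (2 <= n)%nat) (halpha : 0 < alpha) (hk : (1 <= k)%nat) :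
  lebesgue_measure_ge n (union_Rk n k alpha)
    (/ (3 * 2 ^ (n - 2)) * INR k ^ (n - 1) * alpha).
Proof.
  intros a b Hcover.
  apply series_ge_ext_le with (u := fun j => 1 * box_vol n (a j) (b j))
                           (c := alpha * (INR k / 2) ^ (n - 1));
    [intro; ring | apply scaled_pow_le_half_pow; [exact hn | lra] |].
  destruct n as [|m]; [lia|]. replace (S m - 1)%nat with m by lia.
  rewrite <- (wsum_vol_dyadic_cells k m alpha) by lra.
  apply wsum_vol_le_cover; [intro; lra | |].
  - intros p Hp. rewrite (dyadic_cells_coef _ _ _ _ Hp). lra.
  - intro x. apply series_ge_ext_le with (2 := Rle_trans _ _ _
      (wsum_chi_dyadic_cells_le k m alpha x) (chi_le _ _ (staircase_union_Rk k m alpha x)))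
      (3 := series_ge_chi_cover _ _ _ _ x Hcover).
    intro. ring.
Qed.
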